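(* For any $k\ge1$ and any $k$-dimensional convex polytope $P$ that has an insphere, letting $x$ be the radius of the insphere, for every integer $n\ge1$ we have $Disp(n;P)=\frac{2x\,DP(n;P)}{x+DP(n;P)}$.
   Context: A $k$-dimensional convex polytope has an insphere if the largest ball contained in $P$ is tangent to all facets of $P$. Distances are Euclidean. $Disp(n;P)=\max_{X_1,\dots,X_n\in P}\min\{dis(X_i,\partial P),dis(X_i,X_j):i\ne j\}$. For $r\ge0$, $Pack(r;P)$ is the maximum number of pairwise non-overlapping balls of radius $r$ contained in $P$, and $DP(n;P)=\max\{r:Pack(r;P)\ge n\}$. *)

From HB Require Import structures.
From mathcomp Require Import all_boot all_order all_algebra.
From mathcomp Require Import classical_sets reals.
Set Implicit Arguments. Unset Strict Implicit. Unset Printing Implicit Defensive.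
Import Order.TTheory GRing.Theory Num.Theory.
Local Open Scope ring_scope.
Local Open Scope classical_set_scope.

Section Defs.
Variables (R : realType) (k : nat).
Local Notation vec := 'rV[R]_k.

Definition dot (u v : vec) : R := \sum_(i < k) u 0 i * v 0 i.
Definition edist (u v : vec) : R := Num.sqrt (\sum_(i < k) (u 0 i - v 0 i) ^+ 2).

Definition cball (c : vec) (r : R) : set vec := [set y | edist c y <= r].
Definition oball (c : vec) (r : R) : set vec := [set y | edist c y < r].

Definition einterior (P : set vec) : set vec :=
  [set y | exists e : R, 0 < e /\ oball y e `<=` P].
Definition eclosure (P : set vec) : set vec :=
  [set y | forall e : R, 0 < e -> exists z, P z /\ edist y z < e].
Definition eboundary (P : set vec) : set vec := eclosure P `\` einterior P.

Definition dist_set (X : vec) (S : set vec) : R := inf [set edist X y | y in S].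

Definition halfspace (a : vec) (b : R) : set vec := [set y | dot a y <= b].
Definition hyperplane (a : vec) (b : R) : set vec := [set y | dot a y = b].

Definition bounded_set (P : set vec) : Prop :=
  exists M : R, forall y, P y -> edist 0 y <= M.

Definition is_kpolytope (P : set vec) : Prop :=
  [/\ exists (m : nat) (a : 'I_m -> vec) (b : 'I_m -> R),
        P = [set y | forall j, dot (a j) y <= b j],
      bounded_set P & einterior P !=set0].

Definition affdim_ge_km1 (F : set vec) : Prop :=
  exists (p0 : vec) (q : 'I_k.-1 -> vec),
    [/\ F p0, (forall i, F (p0 + q i)) & row_free (\matrix_(i < k.-1) q i)].

Definition facet (P F : set vec) : Prop :=
  exists (a : vec) (b : R), [/\ a != 0, P `<=` halfspace a b,
    F = P `&` hyperplane a b & affdim_ge_km1 F].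

(* P has an insphere of radius x: the largest ball contained in P has
   radius x and is tangent to (touches) every facet of P *)
Definition has_insphere (P : set vec) (x : R) : Prop :=
  exists c : vec, [/\ cball c x `<=` P,
    (forall (c' : vec) (r : R), 0 <= r -> cball c' r `<=` P -> r <= x) &
    (forall F, facet P F -> cball c x `&` F !=set0)].

Definition minsep (P : set vec) (n : nat) (X : 'I_n -> vec) : R :=
  inf ([set d | exists i, d = dist_set (X i) (eboundary P)] `|`
       [set d | exists i j, i != j /\ d = edist (X i) (X j)]).

Definition Disp (n : nat) (P : set vec) : R :=
  sup [set d | exists X : 'I_n -> vec, (forall i, P (X i)) /\ d = minsep P X].

(* Pack(r;P) >= n : there are n pairwise non-overlapping balls of radius r
   contained in P (non-overlapping = disjoint interiors) *)
Definition Pack_ge (r : R) (P : set vec) (n : nat) : Prop :=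
  exists c : 'I_n -> vec, (forall i, cball (c i) r `<=` P) /\
    (forall i j, i != j -> oball (c i) r `&` oball (c j) r = set0).

Definition DP (n : nat) (P : set vec) : R :=
  sup [set r | 0 <= r /\ Pack_ge r P n].

End Defs.

From mathcomp Require Import all_boot all_order all_algebra.
From mathcomp Require Import classical_sets reals.
From mathcomp Require Import ring lra.
Import Order.TTheory GRing.Theory Num.Theory.
Local Open Scope ring_scope.
Local Open Scope classical_set_scope.
Set Implicit Arguments. Unset Strict Implicit. Unset Printing Implicit Defensive.

(* Write P = {y | a_j . y <= b_j} and let c be the incenter.  A constraint whose
   hyperplane cuts a facet out of P is touched by the insphere, hence tight:
   b_j - a_j . c = x |a_j|; removing the non-tight constraints one at a time
   never changes P, because a constraint whose removal changes P supports a
   facet.  Since the ball of radius r about y lies in P iff every tight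
   constraint has slack r |a_j| at y, the homothety of centre c and ratio t
   maps such a ball to one of radius (1 - t) x + t r inside P.  With
   t = x / (x + r) a packing of n balls of radius r becomes n points at
   distance >= 2xr/(x+r) from each other and from the boundary; with
   t = 2x / (2x - d) a configuration of dispersion d becomes a packing of
   radius dx/(2x - d), the inverse map.  Taking suprema gives the formula. *)

Section Euclidean.
Variables (R : realType) (k : nat).
Local Notation vec := 'rV[R]_k.
Implicit Types (u v w : vec) (s t : R).

Definition enorm v := Num.sqrt (dot v v).

Lemma dotC u v : dot u v = dot v u.
Proof. by apply: eq_bigr => i _; rewrite mulrC. Qed.

Lemma dotDr u v w : dot u (v + w) = dot u v + dot u w.
Proof. by rewrite /dot -big_split; apply: eq_bigr => i _; rewrite mxE mulrDr. Qed.

Lemma dotZr t u v : dot u (t *: v) = t * dot u v.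
Proof. by rewrite /dot mulr_sumr; apply: eq_bigr => i _; rewrite mxE mulrCA. Qed.

Lemma dotNr u v : dot u (- v) = - dot u v.
Proof. by rewrite -scaleN1r dotZr mulN1r. Qed.

Lemma dotBr u v w : dot u (v - w) = dot u v - dot u w.
Proof. by rewrite dotDr dotNr. Qed.

Lemma dotDl u v w : dot (u + v) w = dot u w + dot v w.
Proof. by rewrite dotC dotDr !(dotC w). Qed.

Lemma dotZl t u v : dot (t *: u) v = t * dot u v.
Proof. by rewrite dotC dotZr dotC. Qed.

Lemma dotBl u v w : dot (u - v) w = dot u w - dot v w.
Proof. by rewrite dotC dotBr !(dotC w). Qed.

Lemma dot0l v : dot 0 v = 0.
Proof. by rewrite /dot big1 // => i _; rewrite mxE mul0r. Qed.

Lemma dot_ge0 v : 0 <= dot v v.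
Proof. by apply: sumr_ge0 => i _; rewrite -expr2 sqr_ge0. Qed.

Lemma dot_eq0 v : dot v v = 0 -> v = 0.
Proof.
move=> /psumr_eq0P vv0; apply/rowP => i; apply/eqP; rewrite mxE.
by rewrite -[_ == 0]orbb -mulf_eq0 vv0 // => l _; rewrite -expr2 sqr_ge0.
Qed.

Lemma dot_homothety u c w t : dot u (c + t *: (w - c)) = (1 - t) * dot u c + t * dot u w.
Proof. by rewrite dotDr dotZr dotBr; ring. Qed.

Lemma enorm_ge0 v : 0 <= enorm v.
Proof. exact: sqrtr_ge0. Qed.

Lemma enorm_gt0 v : v != 0 -> 0 < enorm v.
Proof.
move=> v0; rewrite sqrtr_gt0 lt_neqAle dot_ge0 andbT eq_sym.
by apply: contra v0 => /eqP /dot_eq0 ->.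
Qed.

Lemma sqr_enorm v : enorm v ^+ 2 = dot v v.
Proof. by rewrite sqr_sqrtr // dot_ge0. Qed.

Lemma enormZ t v : enorm (t *: v) = `|t| * enorm v.
Proof. by rewrite /enorm dotZl dotZr mulrA -expr2 sqrtrM ?sqr_ge0 // sqrtr_sqr. Qed.

Lemma enormN v : enorm (- v) = enorm v.
Proof. by rewrite -scaleN1r enormZ normrN1 mul1r. Qed.

Lemma cauchy_schwarz u v : dot u v <= enorm u * enorm v.
Proof.
have [->|/enorm_gt0] := eqVneq u 0; first by rewrite dot0l /enorm dot0l sqrtr0 mul0r.
rewrite sqrtr_gt0; set d := dot u u => d_gt0.
have := dot_ge0 (d *: v - dot u v *: u).
rewrite !dotBl !dotBr !dotZl !dotZr (dotC v u) -/d => h.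
have sq : dot u v ^+ 2 <= d * dot v v.
  have : 0 <= d * (d * dot v v - dot u v ^+ 2) by nra.
  by rewrite pmulr_rge0 // subr_ge0.
have := ler_wsqrtr sq; rewrite sqrtr_sqr (sqrtrM _ (ltW d_gt0)).
exact: le_trans (ler_norm _).
Qed.

Lemma enormD u v : enorm (u + v) <= enorm u + enorm v.
Proof.
have cs := cauchy_schwarz u v.
have : dot (u + v) (u + v) <= (enorm u + enorm v) ^+ 2.
  rewrite !dotDl !dotDr (dotC v u) sqrrD -!sqr_enorm; lra.
move=> sq; have := ler_wsqrtr sq.
by rewrite sqrtr_sqr ger0_norm // addr_ge0 ?enorm_ge0.
Qed.

Lemma edistE u v : edist u v = enorm (u - v).
Proof.
rewrite /edist /enorm /dot; congr Num.sqrt.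
by apply: eq_bigr => i _; rewrite !mxE expr2.
Qed.

Lemma edist_ge0 u v : 0 <= edist u v.
Proof. exact: sqrtr_ge0. Qed.

Lemma edistC u v : edist u v = edist v u.
Proof. by rewrite !edistE -enormN opprB. Qed.

Lemma edistxx u : edist u u = 0.
Proof. by rewrite edistE subrr /enorm dot0l sqrtr0. Qed.

Lemma edist_triangle u v w : edist u w <= edist u v + edist v w.
Proof. by rewrite !edistE; apply: le_trans (enormD _ _); rewrite addrA subrK. Qed.

Lemma edist_addr u w : edist u (u + w) = enorm w.
Proof. by rewrite edistE opprD addrA subrr add0r enormN. Qed.

Lemma edist_homothety c u v t :
  edist (c + t *: (u - c)) (c + t *: (v - c)) = `|t| * edist u v.
Proof.
rewrite !edistE -enormZ; congr enorm.
by rewrite opprD addrACA subrr add0r -scalerBr opprB addrA subrK.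
Qed.

Lemma dot_shift_along u y s : u != 0 ->
  dot u (y + (s / enorm u) *: u) = dot u y + s * enorm u.
Proof.
move=> /enorm_gt0 u_gt0.
by rewrite dotDr dotZr -sqr_enorm expr2 mulrA divfK ?gt_eqF.
Qed.

Lemma edist_shift_along u y s : u != 0 -> 0 <= s ->
  edist y (y + (s / enorm u) *: u) = s.
Proof.
move=> /enorm_gt0 u_gt0 s_ge0.
rewrite edist_addr enormZ ger0_norm ?divfK ?gt_eqF //.
exact: divr_ge0 s_ge0 (ltW u_gt0).
Qed.

Lemma orthogonal_row_base v : v != 0 ->
  exists2 B : 'M[R]_(k.-1, k), row_free B & forall i, dot v (row i B) = 0.
Proof.
move=> v0; set K := kermx v^T.
have rK : \rank K = k.-1 by rewrite mxrank_ker mxrank_tr rank_rV v0 subn1.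
exists (castmx (rK, erefl) (row_base K)); first by rewrite row_free_castmx row_base_free.
move=> i; have : (castmx (rK, erefl) (row_base K) <= K)%MS.
  by rewrite (eqmx_cast _ (rK, erefl)) eq_row_base.
move=> /sub_kermxP /(congr1 (row i)); rewrite row_mul row0 => /rowP /(_ 0).
rewrite !mxE => <-; rewrite dotC; apply: eq_bigr => j _; by rewrite !mxE.
Qed.

Lemma oballI_eq0 u v r : oball u r `&` oball v r = set0 <-> 2 * r <= edist u v.
Proof.
split=> [uv0|uvr].
  rewrite leNgt; apply/negP => uv_lt.
  have mid_sym : u + 2^-1 *: (v - u) = v + 2^-1 *: (u - v).
    by apply/rowP => i; rewrite !mxE; field.
  have : (oball u r `&` oball v r) (u + 2^-1 *: (v - u)).
    split; rewrite /oball /=; [|rewrite mid_sym];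
      rewrite edist_addr enormZ ger0_norm ?invr_ge0 // -enormN opprB -edistE.
      by lra.
    by rewrite edistC; lra.
  by rewrite uv0.
apply/seteqP; split => // z []; rewrite /oball /= [edist v z]edistC => uz vz.
by have := edist_triangle u z v; lra.
Qed.

End Euclidean.

Section DistanceToSet.
Variables (R : realType) (k : nat).
Local Notation vec := 'rV[R]_k.
Implicit Types (S : set vec) (y q : vec).

Lemma eclosure_sub S : S `<=` eclosure S.
Proof. by move=> q Sq e e_gt0; exists q; rewrite edistxx. Qed.

Lemma dist_set_lbound y S : has_lbound [set edist y q | q in S].
Proof. by exists 0 => _ [q _ <-]; exact: edist_ge0. Qed.

Lemma dist_set_ge0 y S : 0 <= dist_set y S.
Proof.
have [->|/set0P S0] := eqVneq S set0; first by rewrite /dist_set image_set0 inf0.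
by apply: lb_le_inf => [|_ [q _ <-]]; [exact: image_nonempty | exact: edist_ge0].
Qed.

Lemma dist_set_le y S q : S q -> dist_set y S <= edist y q.
Proof. by move=> Sq; apply: ge_inf; [exact: dist_set_lbound | exists q]. Qed.

Lemma dist_set_ge y S r : S !=set0 -> (forall q, S q -> r <= edist y q) ->
  r <= dist_set y S.
Proof.
move=> S0 rS; apply: lb_le_inf => [|_ [q Sq <-]]; last exact: rS.
exact: image_nonempty.
Qed.

Lemma cball_sub_dist_boundary S y r : eboundary S !=set0 -> cball y r `<=` S ->
  r <= dist_set y (eboundary S).
Proof.
move=> bd0 yrS; apply: dist_set_ge => // q [_ q_int].
rewrite leNgt; apply/negP => qy; apply: q_int.
exists (r - edist y q); split; first by rewrite subr_gt0.
move=> z; rewrite /oball /= => qz; apply: yrS; rewrite /cball /=.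
by have := edist_triangle y q z; lra.
Qed.

Lemma insphere_radius_gt0 S x : has_insphere S x -> einterior S !=set0 -> 0 < x.
Proof.
move=> [c [_ x_max _]] [y [e [e_gt0 yeS]]].
suff : e / 2 <= x by lra.
apply: (x_max y) => [|z]; first by lra.
by rewrite /cball /= => yz; apply: yeS; rewrite /oball /=; lra.
Qed.

End DistanceToSet.

Lemma small_pos_multiplier (R : realFieldType) (I : finType) (Q : pred I) (u d : I -> R) :
  (forall i, Q i -> 0 < d i) -> exists2 e : R, 0 < e & forall i, Q i -> e * u i <= d i.
Proof.
move=> d_gt0; pose s := \sum_(i | Q i) `|u i| / d i.
have s_ge0 : 0 <= s by apply: sumr_ge0 => i /d_gt0 /ltW; apply: divr_ge0.
exists (1 + s)^-1 => [|i Qi]; first by rewrite invr_gt0; lra.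
have di_gt0 := d_gt0 i Qi.
have : `|u i| / d i <= s.
  rewrite /s (bigD1 i) //= lerDl; apply: sumr_ge0 => l /andP [/d_gt0 /ltW + _].
  exact: divr_ge0.
rewrite ler_pdivrMr // => ui_le.
rewrite mulrC ler_pdivrMr; last by lra.
by have := ler_norm (u i); nra.
Qed.

Section Polyhedron.
Variables (R : realType) (k m : nat) (a : 'I_m -> 'rV[R]_k) (b : 'I_m -> R).
Local Notation vec := 'rV[R]_k.
Let P : set vec := [set y | forall j, dot (a j) y <= b j].

Definition constraints_suffice (T : pred 'I_m) :=
  forall z, (forall l, T l -> dot (a l) z <= b l) -> P z.

Lemma cball_sub_slack y r j : 0 <= r -> cball y r `<=` P -> a j != 0 ->
  dot (a j) y + r * enorm (a j) <= b j.
Proof.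
move=> r_ge0 yrP aj; rewrite -dot_shift_along //; apply: yrP.
by rewrite /cball /= edist_shift_along.
Qed.

Lemma slack_cball_sub (T : pred 'I_m) y r : constraints_suffice T ->
  (forall j, T j -> dot (a j) y + r * enorm (a j) <= b j) -> cball y r `<=` P.
Proof.
move=> TP slack z; rewrite /cball /= edistE -enormN opprB => yz.
apply: TP => j Tj; have := slack j Tj.
have -> : dot (a j) z = dot (a j) y + dot (a j) (z - y) by rewrite dotBr addrC subrK.
have := cauchy_schwarz (a j) (z - y).
by have := ler_wpM2l (enorm_ge0 (a j)) yz; nra.
Qed.

Lemma hyperplane_not_interior q j : a j != 0 -> dot (a j) q = b j -> ~ einterior P q.
Proof.
move=> aj qj [e [e_gt0 qeP]]; have aj_gt0 := enorm_gt0 aj.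
have : P (q + (e / 2 / enorm (a j)) *: a j).
  by apply: qeP; rewrite /oball /= edist_shift_along //; lra.
move=> /(_ j); rewrite dot_shift_along // qj.
have : 0 < e / 2 * enorm (a j) by apply: mulr_gt0 => //; lra.
lra.
Qed.

Lemma boundary_point_within y j : P y -> a j != 0 ->
  exists2 q, eboundary P q & edist y q <= (b j - dot (a j) y) / enorm (a j).
Proof.
move=> Py aj; pose sigma l := (b l - dot (a l) y) / enorm (a l).
have [j1 aj1 sigma_min] := arg_minP sigma (P := fun l => a l != 0) aj.
set s := sigma j1; have aj1_gt0 := enorm_gt0 aj1.
have s_ge0 : 0 <= s by apply: divr_ge0; [rewrite subr_ge0; exact: Py | exact: ltW].
pose q := y + (s / enorm (a j1)) *: a j1.
have Pq : P q.
  move=> l; have [al|al] := eqVneq (a l) 0; first by have := Py l; rewrite /q al !dot0l.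
  rewrite /q dotDr dotZr; have al_gt0 := enorm_gt0 al.
  have : s <= sigma l by exact: sigma_min.
  rewrite ler_pdivlMr // -lerBrDl => sl; apply: le_trans sl.
  by rewrite mulrAC ler_pdivrMr // -mulrA ler_wpM2l // cauchy_schwarz.
have qj1 : dot (a j1) q = b j1.
  by rewrite dot_shift_along // /s /sigma divfK ?gt_eqF //; ring.
exists q; first by split; [exact: eclosure_sub | exact: hyperplane_not_interior qj1].
by rewrite edist_shift_along //; exact: sigma_min.
Qed.

Lemma dist_boundary_cball_sub y r : P y -> r <= dist_set y (eboundary P) ->
  cball y r `<=` P.
Proof.
move=> Py r_le z; rewrite /cball /= => yz j.
have [aj|aj] := eqVneq (a j) 0; first by have := Py j; rewrite aj !dot0l.
rewrite leNgt; apply/negP => zj; have aj_gt0 := enorm_gt0 aj.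
have [q bq] := boundary_point_within Py aj; rewrite ler_pdivlMr // => yq.
have zq : edist y z <= edist y q by have := dist_set_le y bq; lra.
have := cauchy_schwarz (a j) (z - y); rewrite dotBr -edistE edistC.
by have := ler_wpM2l (enorm_ge0 (a j)) zq; nra.
Qed.

Lemma boundary_nonempty y j : P y -> a j != 0 -> eboundary P !=set0.
Proof. by move=> Py /(boundary_point_within Py) [q bq _]; exists q. Qed.

Lemma bounded_nonzero_constraint y : (0 < k)%N -> P y -> bounded_set P ->
  exists j, a j != 0.
Proof.
move=> k_gt0 Py [M PM].
have [/existsP //|] := boolP [exists j, a j != 0]; rewrite negb_exists => /forallP a0.
have allP z : P z by move=> j; have := Py j; have /negPn/eqP -> := a0 j; rewrite !dot0l.
pose v : vec := const_mx 1.
have v0 : v != 0 by apply/eqP => /rowP /(_ (Ordinal k_gt0)) /eqP; rewrite !mxE oner_eq0.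
have := PM _ (allP (0 + ((`|M| + 1) / enorm v) *: v)).
rewrite edist_shift_along //; last by have := normr_ge0 M; lra.
by have := ler_norm M; lra.
Qed.

Lemma hyperplane_facet (T : pred 'I_m) j p : constraints_suffice T ->
  a j != 0 -> P p -> dot (a j) p = b j ->
  (forall l, T l -> l != j -> a l != 0 -> dot (a l) p < b l) ->
  facet P (P `&` hyperplane (a j) (b j)).
Proof.
move=> TP aj Pp pj p_strict.
have [B B_free B_orth] := orthogonal_row_base aj.
pose Q (li : 'I_m * 'I_k.-1) := [&& T li.1, li.1 != j & a li.1 != 0].
have Q_slack li : Q li -> 0 < b li.1 - dot (a li.1) p.
  by case: li => l i /and3P [Tl lj al]; rewrite subr_gt0 p_strict.
have [e e_gt0 e_small] :=
  small_pos_multiplier (fun li => `|dot (a li.1) (row li.2 B)|) Q_slack.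
have onF i : (P `&` hyperplane (a j) (b j)) (p + e *: row i B).
  have qj : dot (a j) (p + e *: row i B) = b j by rewrite dotDr dotZr B_orth mulr0 addr0.
  split => //; apply: TP => l Tl.
  have [->|lj] := eqVneq l j; first by rewrite qj.
  have [al|al] := eqVneq (a l) 0; first by have := Pp l; rewrite al !dot0l.
  have := e_small (l, i); rewrite /Q Tl lj al /= dotDr dotZr => /(_ isT).
  by have := ler_norm (dot (a l) (row i B)); have := ltW e_gt0; nra.
exists (a j), (b j); split => //; first by move=> y Py; exact: Py j.
exists p, (fun i => e *: row i B); split => //.
have -> : \matrix_(i < k.-1) (e *: row i B) = e *: B by apply/matrixP => i l; rewrite !mxE.
by rewrite /row_free mxrank_scale_nz // gt_eqF.
Qed.

End Polyhedron.

Section Insphere.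
Variables (R : realType) (k m : nat) (a : 'I_m -> 'rV[R]_k) (b : 'I_m -> R).
Variables (c : 'rV[R]_k) (x : R).
Let P : set 'rV[R]_k := [set y | forall j, dot (a j) y <= b j].
Hypotheses (x_gt0 : 0 < x) (c_xP : cball c x `<=` P).
Hypothesis touches_facets : forall F, facet P F -> cball c x `&` F !=set0.

Definition tight j := (a j != 0) && (b j - dot (a j) c == x * enorm (a j)).

Lemma incenter_in : P c.
Proof. by apply: c_xP; rewrite /cball /= edistxx ltW. Qed.

Lemma incenter_slack j : a j != 0 -> dot (a j) c + x * enorm (a j) <= b j.
Proof. exact: cball_sub_slack (ltW x_gt0) c_xP. Qed.

Lemma tight_of_touching j q : a j != 0 -> cball c x q -> dot (a j) q = b j -> tight j.
Proof.
rewrite /cball /= edistE -enormN opprB => aj cq qj.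
rewrite /tight aj eq_le; have := incenter_slack aj.
have := cauchy_schwarz (a j) (q - c); rewrite dotBr qj.
by have := ler_wpM2l (enorm_ge0 (a j)) cq; nra.
Qed.

Lemma essential_constraint_tight (T : pred 'I_m) j w :
  constraints_suffice a b T -> b j < dot (a j) w ->
  (forall l, T l -> l != j -> dot (a l) w <= b l) -> tight j.
Proof.
move=> TP jw w_other.
have aj : a j != 0.
  by apply: contraTneq jw => aj0; have := incenter_in j; rewrite aj0 !dot0l -leNgt.
have cj := incenter_slack aj; have aj_gt0 := enorm_gt0 aj.
have cj_lt : dot (a j) c < b j by have := mulr_gt0 x_gt0 aj_gt0; lra.
pose t := (b j - dot (a j) c) / (dot (a j) w - dot (a j) c).
have t_gt0 : 0 < t by rewrite divr_gt0 // subr_gt0 //; lra.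
have t_lt1 : t < 1 by rewrite ltr_pdivrMr ?mul1r; lra.
pose p := c + t *: (w - c).
have pj : dot (a j) p = b j.
  by rewrite dot_homothety /t; field; apply/eqP; lra.
have p_strict l : T l -> l != j -> a l != 0 -> dot (a l) p < b l.
  move=> Tl lj al; have := w_other l Tl lj; have := incenter_slack al.
  have := mulr_gt0 x_gt0 (enorm_gt0 al); rewrite dot_homothety; nra.
have Pp : P p.
  apply: TP => l Tl; have [->|lj] := eqVneq l j; first by rewrite pj.
  have [al|al] := eqVneq (a l) 0; last exact/ltW/p_strict.
  by have := incenter_in l; rewrite al !dot0l.
have [q [cq [_ qj]]] := touches_facets (hyperplane_facet TP aj Pp pj p_strict).
exact: tight_of_touching aj cq qj.
Qed.

Lemma drop_constraint j s :
  constraints_suffice a b (fun l => tight l || (l \in j :: s)) ->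
  constraints_suffice a b (fun l => tight l || (l \in s)).
Proof.
move=> suff_js z z_ok; apply: (suff_js) => l; rewrite in_cons.
have [-> _|lj] := eqVneq l j; last exact: z_ok.
have z_other l' : tight l' || (l' \in j :: s) -> l' != j -> dot (a l') z <= b l'.
  by rewrite in_cons => + l'j; rewrite (negPf l'j); exact: z_ok.
rewrite leNgt; apply/negP => jz.
have tj := essential_constraint_tight suff_js jz z_other.
by move: jz; rewrite ltNge z_ok // tj.
Qed.

Lemma tight_constraints_suffice : constraints_suffice a b tight.
Proof.
have from_s (s : seq 'I_m) : constraints_suffice a b (fun l => tight l || (l \in s)) ->
    constraints_suffice a b tight.
  elim: s => [|j s IH] suff_s; last exact: IH (drop_constraint suff_s).
  by move=> z z_ok; apply: suff_s => l; rewrite in_nil orbF; exact: z_ok.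
by apply: (from_s (enum 'I_m)) => z z_ok j; apply: z_ok; rewrite mem_enum orbT.
Qed.

Lemma cball_homothety y r t : 0 <= r -> 0 <= t -> cball y r `<=` P ->
  cball (c + t *: (y - c)) ((1 - t) * x + t * r) `<=` P.
Proof.
move=> r_ge0 t_ge0 yrP; apply: slack_cball_sub tight_constraints_suffice _.
move=> j /andP [aj /eqP cj]; rewrite dot_homothety.
by have := ler_wpM2l t_ge0 (cball_sub_slack r_ge0 yrP aj); nra.
Qed.

End Insphere.

Section MinimalSeparation.
Variables (R : realType) (k : nat) (P : set 'rV[R]_k) (n : nat).
Implicit Type X : 'I_n -> 'rV[R]_k.

Lemma minsep_le_dist X i : minsep P X <= dist_set (X i) (eboundary P).
Proof.
apply: ge_inf; last by left; exists i.
by exists 0 => _ [[l ->]|[l [l' [_ ->]]]]; [exact: dist_set_ge0 | exact: edist_ge0].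
Qed.

Lemma minsep_le_edist X i j : i != j -> minsep P X <= edist (X i) (X j).
Proof.
move=> ij; apply: ge_inf; last by right; exists i, j.
by exists 0 => _ [[l ->]|[l [l' [_ ->]]]]; [exact: dist_set_ge0 | exact: edist_ge0].
Qed.

Lemma minsep_ge X d : (0 < n)%N ->
  (forall i, d <= dist_set (X i) (eboundary P)) ->
  (forall i j, i != j -> d <= edist (X i) (X j)) -> d <= minsep P X.
Proof.
move=> n_gt0 d_dist d_edist; apply: lb_le_inf => [|_ [[i ->]|[i [j [ij ->]]]]].
- by exists (dist_set (X (Ordinal n_gt0)) (eboundary P)); left; exists (Ordinal n_gt0).
- exact: d_dist.
- exact: d_edist.
Qed.

End MinimalSeparation.

Lemma sup_harmonic_mean (R : realType) (D E : set R) (x : R) : 0 < x ->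
  D !=set0 -> E !=set0 ->
  (forall d, D d -> 0 <= d <= x) -> (forall r, E r -> 0 <= r <= x) ->
  (forall r, E r -> 2 * x * r / (x + r) <= sup D) ->
  (forall d, D d -> d * x / (2 * x - d) <= sup E) ->
  sup D = 2 * x * sup E / (x + sup E).
Proof.
move=> x_gt0 D0 E0 D_bd E_bd D_ge E_ge.
have sup_bd (S : set R) : S !=set0 -> (forall d, S d -> 0 <= d <= x) -> 0 <= sup S <= x.
  move=> [d Sd] S_bd; have /andP [d_ge0 _] := S_bd d Sd; apply/andP; split.
    by apply: le_trans d_ge0 _; apply: ub_le_sup Sd; exists x => e /S_bd /andP [].
  by apply: ge_sup; [exists d | move=> e /S_bd /andP []].
have /andP [sD_ge0 sD_le] := sup_bd D D0 D_bd.
have /andP [sE_ge0 sE_le] := sup_bd E E0 E_bd.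
have sE_up : sup E <= sup D * x / (2 * x - sup D).
  apply: ge_sup => // r Er; have /andP [r_ge0 r_le] := E_bd r Er.
  have := D_ge r Er; rewrite ler_pdivrMr; last by lra.
  by rewrite ler_pdivlMr; [nra | lra].
have sD_up : sup D <= 2 * x * sup E / (x + sup E).
  apply: ge_sup => // d Dd; have /andP [d_ge0 d_le] := D_bd d Dd.
  have := E_ge d Dd; rewrite ler_pdivrMr; last by lra.
  by rewrite ler_pdivlMr; [nra | lra].
move: sE_up sD_up; rewrite ler_pdivlMr; last by lra.
rewrite ler_pdivlMr; last by lra.
move=> sE_up sD_up; apply: (mulIf (x := x + sup E)); first by rewrite gt_eqF //; lra.
by rewrite divfK; [nra | rewrite gt_eqF //; lra].
Qed.

Section DispersionPacking.
Variables (R : realType) (k m : nat) (a : 'I_m -> 'rV[R]_k) (b : 'I_m -> R).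
Variables (c : 'rV[R]_k) (x : R) (n : nat).
Local Notation vec := 'rV[R]_k.
Let P : set vec := [set y | forall j, dot (a j) y <= b j].
Hypotheses (x_gt0 : 0 < x) (c_xP : cball c x `<=` P).
Hypothesis touches_facets : forall F, facet P F -> cball c x `&` F !=set0.
Hypothesis x_max : forall (c' : vec) (r : R), 0 <= r -> cball c' r `<=` P -> r <= x.
Hypotheses (bd0 : eboundary P !=set0) (n_gt0 : (0 < n)%N).

Let D : set R := [set d | exists X : 'I_n -> vec, (forall i, P (X i)) /\ d = minsep P X].
Let E : set R := [set r | 0 <= r /\ Pack_ge r P n].

Lemma minsep_bounds (X : 'I_n -> vec) : (forall i, P (X i)) -> 0 <= minsep P X <= x.
Proof.
move=> PX; apply/andP; split.
  by apply: minsep_ge => // [i|i j _]; [exact: dist_set_ge0 | exact: edist_ge0].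
apply: le_trans (minsep_le_dist P X (Ordinal n_gt0)) _.
apply: x_max; first exact: dist_set_ge0.
exact: dist_boundary_cball_sub (PX _) (lexx _).
Qed.

Lemma packing_radius_bounds r : E r -> 0 <= r <= x.
Proof. by move=> [r_ge0 [C [CP _]]]; rewrite r_ge0; exact: x_max (CP (Ordinal n_gt0)). Qed.

Lemma dispersion_of_packing r : E r -> 2 * x * r / (x + r) <= sup D.
Proof.
move=> Er; have /andP [r_ge0 _] := packing_radius_bounds Er.
case: Er => _ [C [CP C_disj]].
have xr_gt0 : 0 < x + r by rewrite (lt_le_trans x_gt0) ?lerDl.
pose t := x / (x + r); have t_ge0 : 0 <= t by rewrite divr_ge0 ?ltW.
pose X i := c + t *: (C i - c).
have XP i : cball (X i) (2 * x * r / (x + r)) `<=` P.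
  have -> : 2 * x * r / (x + r) = (1 - t) * x + t * r by rewrite /t; field; rewrite gt_eqF.
  exact: cball_homothety.
have sep_ge : 2 * x * r / (x + r) <= minsep P X.
  apply: minsep_ge => // [i|i j ij]; first exact: cball_sub_dist_boundary.
  rewrite edist_homothety ger0_norm //.
  have -> : 2 * x * r / (x + r) = t * (2 * r) by rewrite /t; field; rewrite gt_eqF.
  by apply: ler_wpM2l => //; apply/oballI_eq0; exact: C_disj.
apply: le_trans sep_ge _; apply: ub_le_sup.
  by exists x => _ [X' [PX' ->]]; have /andP [] := minsep_bounds PX'.
exists X; split => // i; apply: (XP i); rewrite /cball /= edistxx.
by apply: divr_ge0; [have := x_gt0; nra | exact: ltW].
Qed.

Lemma packing_of_dispersion d : D d -> E (d * x / (2 * x - d)).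
Proof.
move=> [X [PX d_sep]]; have /andP [d_ge0 d_le] := minsep_bounds PX.
rewrite -d_sep in d_ge0 d_le; have xd_gt0 : 0 < 2 * x - d by have := x_gt0; lra.
pose t := 2 * x / (2 * x - d).
have t_ge0 : 0 <= t by apply: divr_ge0; [have := x_gt0; lra | exact: ltW].
split; first by apply: divr_ge0; [have := x_gt0; nra | exact: ltW].
exists (fun i => c + t *: (X i - c)); split => [i|i j ij].
  have -> : d * x / (2 * x - d) = (1 - t) * x + t * d by rewrite /t; field; rewrite gt_eqF.
  apply: cball_homothety => //; apply: dist_boundary_cball_sub; first exact: PX.
  by rewrite d_sep; exact: minsep_le_dist.
apply/oballI_eq0; rewrite edist_homothety ger0_norm //.
have -> : 2 * (d * x / (2 * x - d)) = t * d by rewrite /t; field; rewrite gt_eqF.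
by apply: ler_wpM2l => //; rewrite d_sep; exact: minsep_le_edist.
Qed.

Lemma Disp_DP_harmonic : Disp n P = 2 * x * DP n P / (x + DP n P).
Proof.
apply: sup_harmonic_mean => //.
- exists (minsep P ((fun=> c) : 'I_n -> vec)), (fun=> c).
  by split => // i; exact: incenter_in x_gt0 c_xP.
- exists 0; split => //; exists (fun=> c); split => [i z|i j _].
    by rewrite /cball /= => cz; apply: c_xP; rewrite /cball /=; have := x_gt0; lra.
  by apply/oballI_eq0; rewrite mulr0 edist_ge0.
- by move=> _ [X [PX ->]]; exact: minsep_bounds.
- exact: packing_radius_bounds.
- exact: dispersion_of_packing.
- move=> d Dd; apply: ub_le_sup; last exact: packing_of_dispersion.
  by exists x => r /packing_radius_bounds /andP [].
Qed.

End DispersionPacking.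

Theorem claim3 (R : realType) (k : nat) (P : set 'rV[R]_k) (x : R) :
  (1 <= k)%N -> is_kpolytope P -> has_insphere P x ->
  forall n : nat, (1 <= n)%N ->
    Disp n P = (2 * x * DP n P) / (x + DP n P).
Proof.
move=> k_gt0 [[m [a [b ->]]] P_bd P_int] insphere n n_gt0.
have x_gt0 := insphere_radius_gt0 insphere P_int.
case: insphere => c [c_xP x_max touches].
have Pc := incenter_in x_gt0 c_xP.
have [j aj] := bounded_nonzero_constraint k_gt0 Pc P_bd.
exact: Disp_DP_harmonic x_gt0 c_xP touches x_max (boundary_nonempty Pc aj) n_gt0.
Qed.
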